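(* The action of $G=\mathrm{SL}_n(\mathbb C)$ on $\mathring X_{u,\beta}$ by simultaneous left multiplication on all weighted flags is free.
   Context: $G=\mathrm{SL}_n(\mathbb C)$, $B_+$ upper triangular, $U_+$ upper unitriangular matrices; $I=\{1,\dots,n-1\}$, $\pm I=I\sqcup(-I)$; $i^*=n-i$, $(-i)^*=-i^*$; $w_0$ longest element of $S_n$. $\phi_i:\mathrm{SL}_2\to G$ places a $2\times2$ block in rows/columns $i,i+1$; $\dot s_i=\phi_i\begin{pmatrix}0&-1\\1&0\end{pmatrix}$, $\dot w=\dot s_{j_1}\cdots\dot s_{j_l}$ for a reduced word of $w$. Weighted flags: elements of $G/U_+$. For $F=g_1U_+$, $F'=g_2U_+$: $F\xrightarrow{w}F'$ (strictly $w$-related) if $g_1^{-1}g_2\in U_+\dot wU_+$; $F\Rightarrow^{w}F'$ (weakly) if $g_1^{-1}g_2\in B_+\dot wB_+$. For $i\in\pm I$: $s_i^+=s_i,s_i^-=\mathrm{id}$ if $i>0$; $s_i^+=\mathrm{id},s_i^-=s_{-i}$ if $i<0$. Double braid word $\beta=(i_1,\dots,i_m)\in(\pm I)^m$, $u\in S_n$ with $u\le\beta$ (i.e. $u\le s^-_{i_m}*\cdots*s^-_{i_1}*s^+_{i_1}*\dots*s^+_{i_m}$ in Bruhat order, $*$ the Demazure product). $\mathring X_{u,\beta}$ is the variety of tuples $(X_0,\dots,X_m,Y_0,\dots,Y_m)$ of weighted flags with $X_c\xrightarrow{s^+_{i_c}}X_{c-1}$ and $Y_{c-1}\xrightarrow{s^-_{i_c^*}}Y_c$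 for $c\in[m]$ (strict $\mathrm{id}$-relation means equality), $Y_m\xrightarrow{w_0u}X_m$, and $Y_0\Rightarrow^{w_0}X_0$. *)

From HB Require Import structures.
From mathcomp Require Import all_boot all_order all_algebra all_fingroup.
From mathcomp Require Import reals complex.
From Stdlib Require Import Relations.
Set Implicit Arguments. Unset Strict Implicit. Unset Printing Implicit Defensive.
Import Order.TTheory GRing.Theory Num.Theory.
Local Open Scope ring_scope.

Section Defs.
Variable n : nat.

(* usual composition (u o v)(x) = u (v x); note mathcomp's (v * u)%g x = u (v x) *)
Definition pcomp (u v : 'S_n) : 'S_n := (v * u)%g.

(* simple transposition s_i (i in I = {1..n-1}) swapping positions i and i+1,
   i.e. 0-indexed positions i-1 and i. *)
Definition sperm (i : nat) : 'S_n :=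
  match (insub i.-1 : option 'I_n), (insub i : option 'I_n) with
  | Some a, Some b => tperm a b
  | _, _ => 1%g
  end.

(* s for "simple reflection or identity": None = id, Some i = s_i *)
Definition operm (x : option nat) : 'S_n :=
  if x is Some i then sperm i else 1%g.

Definition plength (w : 'S_n) : nat :=
  #|[set p : 'I_n * 'I_n | (p.1 < p.2)%N && (w p.2 < w p.1)%N]|.

Definition w0 : 'S_n := perm (@rev_ord_inj n).

Definition bruhat_step (u v : 'S_n) : Prop :=
  exists x y : 'I_n, x != y /\ v = pcomp u (tperm x y) /\ (plength u < plength v)%N.
Definition bruhat_le (u v : 'S_n) : Prop := clos_refl_trans _ bruhat_step u v.

Definition dem_mul (x : option nat) (w : 'S_n) : 'S_n :=
  if x is Some i then
    (if (plength w < plength (pcomp (sperm i) w))%N then pcomp (sperm i) w else w)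
  else w.

Definition in_pmI (i : int) : bool := (i != 0) && (`|i| <= n.-1)%N.

(* s_i^+ and s_i^- as "simple reflection or identity" *)
Definition splus (i : int) : option nat := if (0 < i) then Some `|i|%N else None.
Definition sminus (i : int) : option nat := if (i < 0) then Some `|i|%N else None.

Definition istar (i : int) : int :=
  if (0 < i) then ((n - `|i|)%N)%:Z else - ((n - `|i|)%N)%:Z.

(* s^-_{i_m} * ... * s^-_{i_1} * s^+_{i_1} * ... * s^+_{i_m}  (Demazure product) *)
Definition dem_beta (beta : seq int) : 'S_n :=
  foldr dem_mul 1%g (rev (map sminus beta) ++ map splus beta).

Definition word_perm (s : seq nat) : 'S_n := foldr (fun j w => pcomp (sperm j) w) 1%g s.
Definition reduced_word (w : 'S_n) (s : seq nat) : Prop :=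
  all (fun j => (0 < j <= n.-1)%N) s /\ word_perm s = w /\ size s = plength w.

Variable R : realType.
Notation C := (R[i]).

Definition inSL (g : 'M[C]_n) : Prop := \det g = 1.
Definition upper_uni (g : 'M[C]_n) : Prop :=
  forall a b : 'I_n, ((b < a)%N -> g a b = 0) /\ (a = b -> g a b = 1).
Definition inB (g : 'M[C]_n) : Prop :=
  (forall a b : 'I_n, (b < a)%N -> g a b = 0) /\ inSL g.

(* \dot s_i = phi_i [[0,-1],[1,0]] *)
Definition sdot (i : nat) : 'M[C]_n :=
  \matrix_(a, b)
    (if ((a == i.-1 :> nat) && (b == i :> nat)) then -1
     else if ((a == i :> nat) && (b == i.-1 :> nat)) then 1
     else if (a == b) && (a != i.-1 :> nat) && (a != i :> nat) then 1 else 0).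

Definition word_dot (s : seq nat) : 'M[C]_n := foldr (fun j M => sdot j *m M) 1%:M s.

(* Weighted flags are elements of G/U_+, represented by g in SL_n; g1 U_+ = g2 U_+
   iff g1^{-1} g2 in U_+. *)
Definition flag_eq (g1 g2 : 'M[C]_n) : Prop := upper_uni (invmx g1 *m g2).

(* strictly w-related: g1^{-1} g2 in U_+ \dot w U_+, \dot w from a reduced word
   (independent of the reduced word). *)
Definition strict_rel (w : 'S_n) (g1 g2 : 'M[C]_n) : Prop :=
  exists s, reduced_word w s /\
  exists u1 u2, upper_uni u1 /\ upper_uni u2 /\
    invmx g1 *m g2 = u1 *m word_dot s *m u2.

Definition weak_rel (w : 'S_n) (g1 g2 : 'M[C]_n) : Prop :=
  exists s, reduced_word w s /\
  exists b1 b2, inB b1 /\ inB b2 /\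
    invmx g1 *m g2 = b1 *m word_dot s *m b2.

(* The braid variety \mathring X_{u,beta}: tuples (X_0..X_m, Y_0..Y_m),
   m = size beta, i_c = nth 0 beta c.-1. *)
Definition in_Xring (u : 'S_n) (beta : seq int) (X Y : nat -> 'M[C]_n) : Prop :=
  let m := size beta in
  (forall c, (c <= m)%N -> inSL (X c) /\ inSL (Y c)) /\
  (forall c, (1 <= c <= m)%N ->
     strict_rel (operm (splus (nth 0 beta c.-1))) (X c) (X c.-1) /\
     strict_rel (operm (sminus (istar (nth 0 beta c.-1)))) (Y c.-1) (Y c)) /\
  strict_rel (pcomp w0 u) (Y m) (X m) /\
  weak_rel w0 (Y 0%N) (X 0%N).

End Defs.

(* If [h] fixes the weighted flags [Y_0 U_+] and [X_0 U_+], then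
   [B = Y_0^-1 h^-1 Y_0] and [A = X_0^-1 h^-1 X_0] are upper unitriangular and
   [M A = B M] for [M = Y_0^-1 X_0], which lies in [B_+ w0 B_+] because the two
   flags are in opposite position.  Writing [M = b D c] with [D] a monomial
   matrix of [w0] gives [b^-1 B b = D (c A c^-1) D^-1]: the left side is upper
   unitriangular, the right side lower triangular, so both are [1] and [h = 1]. *)
From HB Require Import structures.
From mathcomp Require Import all_boot all_order all_algebra all_fingroup.
From mathcomp Require Import reals complex.
From mathcomp Require Import zify.
Import Order.TTheory GRing.Theory Num.Theory.
Local Open Scope ring_scope.
Set Implicit Arguments. Unset Strict Implicit.

Section UpperTriangular.
Variables (F : idomainType) (n : nat).
Implicit Types A B b : 'M[F]_n.

Definition upper_trig A := forall i j : 'I_n, (j < i)%N -> A i j = 0.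

Definition upper_unitrig A := upper_trig A /\ forall i, A i i = 1.

Lemma upper_trig_mulmx A B : upper_trig A -> upper_trig B -> upper_trig (A *m B).
Proof.
move=> uA uB i j ji; rewrite mxE big1 // => k _.
have [ki|ik] := ltnP k i; first by rewrite uA ?mul0r.
by rewrite uB ?mulr0 // (leq_trans ji ik).
Qed.

Lemma upper_trig_mulmx_diag A B i : upper_trig A -> upper_trig B -> (A *m B) i i = A i i * B i i.
Proof.
move=> uA uB; rewrite mxE (bigD1 i) //= big1 ?addr0 // => k /negPf ki.
have [lt_ki|lt_ik|/val_inj eq_ki] := ltngtP k i; first by rewrite uA ?mul0r.
- by rewrite uB ?mulr0.
- by rewrite eq_ki eqxx in ki.
Qed.

Lemma det_upper_trig A : upper_trig A -> \det A = \prod_i A i i.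
Proof.
move=> uA; rewrite -det_tr det_trig; last by apply/is_trig_mxP => i j ij; rewrite mxE uA.
by apply: eq_bigr => i _; rewrite mxE.
Qed.

Lemma upper_trig_diag_neq0 A i : upper_trig A -> A \in unitmx -> A i i != 0.
Proof.
move=> uA; rewrite unitmxE det_upper_trig // => /unitr_prodP/(_ i (mem_index_enum i) isT).
by apply: contraTneq => ->; rewrite unitr0.
Qed.

Lemma upper_trig_invmx A : upper_trig A -> A \in unitmx -> upper_trig (invmx A).
Proof.
move=> uA unitA.
suff below0 k (j : 'I_n) : (j : nat) = k -> forall i : 'I_n, (j < i)%N -> invmx A i j = 0.
  by move=> i j; exact: below0.
elim/ltn_ind: k j => k IH j jk i ji.
have : (invmx A *m A) i j = 0 by rewrite mulVmx // mxE -val_eqE /= gtn_eqF.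
rewrite mxE (bigD1 j) //= big1 ?addr0.
  by move/eqP; rewrite mulf_eq0 (negPf (upper_trig_diag_neq0 _ uA unitA)) orbF => /eqP.
move=> l /negPf lj; have [lt_lj|lt_jl|/val_inj eq_lj] := ltngtP l j.
- by rewrite (IH l _ l erefl i (ltn_trans lt_lj ji)) ?mul0r // -jk.
- by rewrite uA ?mulr0.
- by rewrite eq_lj eqxx in lj.
Qed.

Lemma upper_unitrig_conj A b :
  upper_unitrig A -> upper_trig b -> b \in unitmx -> upper_unitrig (invmx b *m A *m b).
Proof.
move=> [uA dA] ub unitb; have ub_inv := upper_trig_invmx ub unitb.
split; first by do 2?apply: upper_trig_mulmx.
move=> i; rewrite upper_trig_mulmx_diag //; last exact: upper_trig_mulmx.
by rewrite upper_trig_mulmx_diag // dA mulr1 -upper_trig_mulmx_diag // mulVmx // mxE eqxx.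
Qed.

End UpperTriangular.

Section Monomial.
Variables (F : idomainType) (n : nat).
Implicit Types (p q : 'S_n) (D E V W : 'M[F]_n).

Definition monomial_of p D := forall i j, (D i j != 0) = (i == p j).

Lemma mulmx_monomiall p D W k j : monomial_of p D -> (D *m W) (p k) j = D (p k) k * W k j.
Proof.
move=> mD; rewrite mxE (bigD1 k) //= big1 ?addr0 // => l lk.
suff /eqP -> : D (p k) l == 0 by rewrite mul0r.
by rewrite -[_ == 0]negbK mD (inj_eq perm_inj) eq_sym lk.
Qed.

Lemma mulmx_monomialr p D V i j : monomial_of p D -> (V *m D) i j = V i (p j) * D (p j) j.
Proof.
move=> mD; rewrite mxE (bigD1 (p j)) //= big1 ?addr0 // => l lpj.
suff /eqP -> : D l j == 0 by rewrite mulr0.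
by rewrite -[_ == 0]negbK mD lpj.
Qed.

Lemma monomial_of1 : monomial_of 1 1%:M.
Proof. by move=> i j; rewrite mxE perm1; case: (i == j); rewrite ?oner_eq0 ?eqxx. Qed.

Lemma monomial_ofM p q D E :
  monomial_of p D -> monomial_of q E -> monomial_of (q * p)%g (D *m E).
Proof.
move=> mD mE i k; rewrite -(permKV p i) mulmx_monomiall // mulf_eq0 negb_or.
by rewrite mD eqxx mE permM (inj_eq perm_inj).
Qed.

End Monomial.

Lemma w0_val n (x : 'I_n) : w0 n x = (n - x.+1)%N :> nat.
Proof. by rewrite permE. Qed.

Lemma w0K n : involutive (w0 n).
Proof. by move=> x; apply: val_inj => /=; rewrite !w0_val; have := ltn_ord x; lia. Qed.

(* [V = D W D^-1] is both upper unitriangular and, since [D] reverses the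
   order of the basis, lower triangular. *)
Lemma upper_unitrig_w0_conj_eq1 (F : idomainType) n (D W V : 'M[F]_n) :
  monomial_of (w0 n) D -> upper_trig W -> upper_unitrig V -> D *m W = V *m D -> V = 1%:M.
Proof.
move=> mD uW [uV dV] eDWV; apply/matrixP => a c; rewrite mxE -val_eqE /=.
have [lt_ac|lt_ca|/val_inj->] := ltngtP a c; rewrite ?mulr0n; last by rewrite dV.
- have := congr1 (fun M : 'M[F]_n => M a (w0 n c)) eDWV => /=.
  rewrite -{1}(w0K a) (mulmx_monomiall _ _ _ mD) (mulmx_monomialr _ _ _ mD) !w0K.
  rewrite uW ?mulr0; last by rewrite !w0_val; have := ltn_ord c; lia.
  move/esym/eqP; rewrite mulf_eq0 => /orP[/eqP //|].
  by rewrite -[_ == 0]negbK mD !w0K eqxx.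
- by rewrite uV.
Qed.

Section OppositeFlags.
Variables (F : idomainType) (n : nat).
Implicit Types (h X Y M A B D b c : 'M[F]_n).

Lemma upper_unitrig_eq1_of_w0_cell M A B b D c :
  M = b *m D *m c -> M *m A = B *m M ->
  upper_trig b -> b \in unitmx -> upper_trig c -> c \in unitmx ->
  monomial_of (w0 n) D -> upper_unitrig A -> upper_unitrig B -> B = 1%:M.
Proof.
move=> -> eMAB ub unit_b uc unit_c mD [uA _] unitrigB.
set V := invmx b *m B *m b.
have unitrigV : upper_unitrig V by exact: upper_unitrig_conj.
have uW : upper_trig (c *m A *m invmx c).
  by do 2?apply: upper_trig_mulmx => //; exact: upper_trig_invmx.
have eDWV : D *m (c *m A *m invmx c) = V *m D.
  transitivity (invmx b *m (b *m D *m c *m A) *m invmx c).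
    by rewrite !mulmxA mulVmx // mul1mx.
  by rewrite eMAB /V !mulmxA -(mulmxA _ c (invmx c)) mulmxV // mulmx1.
have <- : b *m V *m invmx b = B by rewrite /V !mulmxA mulmxV // mul1mx mulmxK.
by rewrite (upper_unitrig_w0_conj_eq1 mD uW unitrigV eDWV) mulmx1 mulmxV.
Qed.

Lemma stabilizer_opposite_flags_eq1 h X Y b D c :
  h \in unitmx -> X \in unitmx -> Y \in unitmx ->
  upper_unitrig (invmx (h *m X) *m X) -> upper_unitrig (invmx (h *m Y) *m Y) ->
  invmx Y *m X = b *m D *m c ->
  upper_trig b -> b \in unitmx -> upper_trig c -> c \in unitmx ->
  monomial_of (w0 n) D -> h = 1%:M.
Proof.
move=> unit_h unit_X unit_Y fixX fixY eM ub unit_b uc unit_c mD.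
have unit_hY : h *m Y \in unitmx by rewrite unitmx_mul unit_h.
have unit_hX : h *m X \in unitmx by rewrite unitmx_mul unit_h.
have eMAB : invmx Y *m X *m (invmx (h *m X) *m X) = invmx (h *m Y) *m Y *m (invmx Y *m X).
  apply: (can_inj (mulKmx unit_hY)); rewrite !mulmxA (mulmxV unit_hY) mul1mx.
  rewrite (mulmxV unit_Y) mul1mx -(mulmxA h Y) (mulmxV unit_Y) mulmx1.
  by rewrite (mulmxV unit_hX) mul1mx.
have B1 := upper_unitrig_eq1_of_w0_cell eM eMAB ub unit_b uc unit_c mD fixX fixY.
have hYY : h *m Y = Y by rewrite -[LHS]mulmx1 -B1 mulmxA mulmxV // mul1mx.
by rewrite -[h](mulmxK unit_Y) hYY mulmxV.
Qed.

End OppositeFlags.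

Lemma sperm_val n j (x : 'I_n) : (0 < j < n)%N ->
  sperm n j x = (if x == j.-1 :> nat then j else if x == j :> nat then j.-1 else x) :> nat.
Proof.
move=> /andP[j_gt0 lt_jn]; rewrite /sperm.
case: insubP => [a _ ea|]; last by rewrite (leq_ltn_trans (leq_pred j)).
case: insubP => [b _ eb|]; last by rewrite lt_jn.
case: tpermP => [->|->|]; rewrite ?ea ?eb ?eqxx //.
  by rewrite gtn_eqF // ltn_predL.
by move=> /eqP + /eqP; rewrite -!(inj_eq val_inj) /= ea eb => /negPf-> /negPf->.
Qed.

Section SLn.
Variable R : realType.

Lemma monomial_sdot n j : (0 < j < n)%N -> monomial_of (sperm n j) (sdot n R j).
Proof.
move=> hj a b; rewrite mxE -[a == b]val_eqE -[_ == sperm _ _ _]val_eqE /= sperm_val //.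
have n1 : (-1 : R[i]) != 0 by rewrite oppr_eq0 oner_eq0.
move: hj (val a) (val b) => /andP[j_gt0 lt_jn] x y.
by do ! case: ifP; rewrite ?n1 ?oner_eq0 ?eqxx //=; lia.
Qed.

Lemma monomial_word_dot n s : all (fun j => 0 < j <= n.-1)%N s ->
  monomial_of (word_perm n s) (word_dot n R s).
Proof.
elim: s => [_|j s IH /= /andP[hj hs]]; first exact: monomial_of1.
by apply: monomial_ofM (IH hs); apply: monomial_sdot; lia.
Qed.

Lemma inSL_unitmx n (g : 'M[R[i]]_n) : inSL g -> g \in unitmx.
Proof. by rewrite unitmxE /inSL => ->; exact: unitr1. Qed.

Lemma upper_uni_unitrig n (g : 'M[R[i]]_n) : upper_uni g -> upper_unitrig g.
Proof. by move=> ug; split=> [i j /(ug i j).1 | i]; last exact: (ug i i).2. Qed.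

Lemma inB_upper_trig n (b : 'M[R[i]]_n) : inB b -> upper_trig b /\ b \in unitmx.
Proof. by case=> ub /inSL_unitmx. Qed.

End SLn.

Theorem proposition6p8 (R : realType) (n : nat) (u : 'S_n) (beta : seq int)
  (hbeta : all (in_pmI n) beta)
  (hu : bruhat_le u (dem_beta n beta))
  (X Y : nat -> 'M[R[i]]_n)
  (hXY : in_Xring u beta X Y)
  (h : 'M[R[i]]_n) (hSL : inSL h)
  (hfix : forall c, (c <= size beta)%N ->
            flag_eq (h *m X c) (X c) /\ flag_eq (h *m Y c) (Y c)) :
  h = 1%:M.
Proof.
case: hXY => inSL_XY [_ [_ [s [[letters_s [w0_s _]] [b [c [Bb [Bc eM]]]]]]]].
have [SL_X0 SL_Y0] := inSL_XY 0%N (leq0n _).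
have [fixX0 fixY0] := hfix 0%N (leq0n _).
have [ub unit_b] := inB_upper_trig Bb.
have [uc unit_c] := inB_upper_trig Bc.
have mD : monomial_of (w0 n) (word_dot n R s).
  by rewrite -w0_s; exact: monomial_word_dot letters_s.
exact: (stabilizer_opposite_flags_eq1 (inSL_unitmx hSL) (inSL_unitmx SL_X0)
  (inSL_unitmx SL_Y0) (upper_uni_unitrig fixX0) (upper_uni_unitrig fixY0)
  eM ub unit_b uc unit_c mD).
Qed.
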